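(* Let $F=(n_F)_{n\ge 1}$ be a sequence belonging to the family $\mathcal{T}_\lambda$. Then $F$ is a cobweb tiling sequence: $F$ is admissible, and for all positive integers $m\le n$ the $F$-box $V_{m,n}$ has a tiling by sub-boxes of the forms $\sigma V_m$.
   Context: Throughout, $\mathbb{N}=\{1,2,\dots\}$. For a sequence of natural numbers $F=(n_F)$ write $[s_F]=\{1,2,\dots,s_F\}$ and $n_F!=n_F\cdot(n-1)_F\cdots 1_F$, with $0_F!=1$. The $F$-nomial coefficient is $\binom{n}{m}_F=\frac{n_F!}{m_F!\,(n-m)_F!}$ for $0\le m\le n$. $F$ is admissible if $\binom{n}{m}_F\in\mathbb{N}\cup\{0\}$ for all $0\le m\le n$. The $F$-box: for $1\le m\le n$ and $k=n-m+1$, let $V_{m,n}=[k_F]\times[(k+1)_F]\times\cdots\times[n_F]\subset\mathbb{N}^m$. Sub-box of the form $\sigma V_m$: for a permutation $\sigma$ of $\{1,\dots,m\}$, this is a set $A=A_1\times\cdots\times A_m$ with $A_s\subseteq[(k+s-1)_F]$ and $|A_s|=(\sigma(s))_F$ for $s=1,\dots,m$. Tiling of $V_{m,n}$: a finite family of pairwise disjoint sub-boxes, each of the form $\sigma V_m$ for some permutation $\sigma$ (which may depend on the sub-box), whose union is $V_{m,n}$. Equivalently, in cobweb language, this is a partition of the maximal paths of the cobweb layer $\langle\Phi_k\to\Phi_n\rangle$ into blocks $\sigma P_m$. A cobweb tiling sequence is an admissible sequence $F$ such that $V_{m,n}$ has a tiling for all $1\le m\le n$. The family $\mathcal{T}_\lambda$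 consists of sequences $F=(n_F)_{n\ge1}$ of natural numbers for which there exist functions $\lambda_K,\lambda_M:\mathbb{N}\times\mathbb{N}\to\mathbb{N}\cup\{0\}$ such that $(k+m)_F=\lambda_K(k,m)\,k_F+\lambda_M(k,m)\,m_F$ for all $k,m\in\mathbb{N}$. *)

From mathcomp Require Import all_boot all_order all_fingroup.
From mathcomp Require Import finmap.
Unset Printing Implicit Defensive.


(* A sequence F = (n_F)_{n>=1} is modelled as F : nat -> nat; the value F 0
   is irrelevant.  Membership in N = {1,2,...} is the hypothesis [Fpos]. *)
Definition Fpos (F : nat -> nat) : Prop := forall n, 0 < n -> 0 < F n.

Definition Ffact (F : nat -> nat) (n : nat) : nat := \prod_(1 <= i < n.+1) F i.

(* binom(n,m)_F = n_F! / (m_F! (n-m)_F!) is a natural number (or 0). *)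
Definition admissible (F : nat -> nat) : Prop :=
  forall n m, m <= n -> exists c : nat, Ffact F n = c * (Ffact F m * Ffact F (n - m)).

Definition T_lambda (F : nat -> nat) : Prop :=
  exists lamK lamM : nat -> nat -> nat,
    forall k m, 0 < k -> 0 < m -> F (k + m) = lamK k m * F k + lamM k m * F m.

(* Coordinates are indexed 0-based by s : 'I_m; coordinate s (1-based s+1)
   ranges over [(k+s)_F] with k = n-m+1.  A point is a function 'I_m -> nat. *)
Definition in_Fbox (F : nat -> nat) (m n : nat) (x : 'I_m -> nat) : Prop :=
  forall s : 'I_m, 1 <= x s <= F (n - m + 1 + s).

Definition subbox (m : nat) : Type := ('S_m * ('I_m -> {fset nat}))%type.

Definition in_subbox (m : nat) (B : subbox m) (x : 'I_m -> nat) : Prop :=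
  forall s : 'I_m, x s \in B.2 s.

Definition is_sigma_subbox (F : nat -> nat) (m n : nat) (B : subbox m) : Prop :=
  forall s : 'I_m,
    (forall a, a \in B.2 s -> 1 <= a <= F (n - m + 1 + s)) /\
    (#|` B.2 s|)%fset = F (B.1 s).+1.

Definition subbox0 (m : nat) : subbox m := (1%g, fun _ => fset0%fset).

Definition tiling (F : nat -> nat) (m n : nat) (T : seq (subbox m)) : Prop :=
  (forall i, i < size T -> is_sigma_subbox F m n (nth (subbox0 m) T i)) /\
  (forall i j, i < size T -> j < size T -> i <> j ->
     forall x, ~ (in_subbox m (nth (subbox0 m) T i) x /\
                  in_subbox m (nth (subbox0 m) T j) x)) /\
  (forall x : 'I_m -> nat,
     in_Fbox F m n x <-> exists2 i, i < size T & in_subbox m (nth (subbox0 m) T i) x).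

Definition cobweb_tiling (F : nat -> nat) : Prop :=
  admissible F /\
  forall m n, 1 <= m -> m <= n -> exists T : seq (subbox m), tiling F m n T.

(** Write the last factor [n_F] of V_{m,n} as the disjoint union of
    a intervals of length (n-m)_F and b intervals of length m_F, where
    n_F = a (n-m)_F + b m_F.  With the last factor of length (n-m)_F the box is a
    coordinate permutation of V_{m,n-1}; with last factor of length m_F it is
    V_{m-1,n-1} times a set of size m_F, i.e. of size sigma(m)_F for the extension
    of sigma fixing m.  The same splitting of n_F gives the recurrence
    binom(n,m)_F = a binom(n-1,m)_F + b binom(n-1,m-1)_F, hence admissibility. *)
From mathcomp Require Import all_boot all_order all_fingroup.
From mathcomp Require Import finmap zify.
Set Implicit Arguments.
Unset Strict Implicit.

Open Scope fset_scope.

Definition fiota (o l : nat) : {fset nat} := [fset x in iota o l].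

Lemma in_fiota x o l : (x \in fiota o l) = (o <= x < o + l)%N.
Proof. by rewrite in_fset /= mem_iota. Qed.

Lemma card_fiota o l : #|` fiota o l| = l.
Proof. by rewrite card_fseq undup_id ?iota_uniq // size_iota. Qed.

Lemma mem_imfset_can (f g : nat -> nat) (A : {fset nat}) y : cancel f g ->
  (y \in [fset f a | a in A]) = (f (g y) == y) && (g y \in A).
Proof.
move=> fK; apply/imfsetP/andP => /= [[a aA ->]|[/eqP eq_y gyA]].
  by rewrite fK.
by exists (g y).
Qed.

Lemma count_andl T (c : bool) (p : pred T) s :
  count (fun y => c && p y) s = c * count p s.
Proof. by case: c; rewrite ?mul1n ?count_pred0 //; apply: eq_count. Qed.

Lemma count_gt1_nth T (p : pred T) x0 s i j : i < size s -> j < size s -> i <> j ->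
  p (nth x0 s i) -> p (nth x0 s j) -> 1 < count p s.
Proof.
wlog lt_ij : i j / i < j.
  move=> W si sj ne pi pj; case: (ltngtP i j) => [lt|lt|eq_ij]; last by case: ne.
    exact: (W i j).
  by apply: (W j i) => // eq_ji; apply: ne.
move=> _ sj _ pi pj; rewrite -(cat_take_drop j s) count_cat.
have p_take : has p (take j s).
  by apply/(has_nthP x0); exists i; rewrite ?size_take ?nth_take // ?sj.
have p_drop : has p (drop j s).
  by apply/(has_nthP x0); exists 0; rewrite ?size_drop ?subn_gt0 // nth_drop addn0.
by move: p_take p_drop; rewrite !has_count; lia.
Qed.

Lemma forall_perm m (r : 'S_m) (P : pred 'I_m) : [forall s, P (r s)] = [forall s, P s].
Proof.
apply/forallP/forallP => H t; last exact: H.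
by rewrite -(permKV r t); apply: H.
Qed.

Lemma forall_ord_max m (P : pred 'I_m.+1) :
  [forall s, P s] = P ord_max && [forall j, P (lift ord_max j)].
Proof.
apply/forallP/andP => [H|[Pmax /forallP Plift] s]; first by split=> //; apply/forallP.
by case: (unliftP ord_max s) => [j ->|->].
Qed.

(** Boxes are products of finite sets [C s], indexed by ['I_m].  A sub-box
    [(sigma, A)] has factor sizes [d (sigma s)]; for V_{m,n} take [d j = F j.+1]
    since [sigma] acts on 0-based coordinates. *)
Section Tilings.
Variable d : nat -> nat.

Definition in_boxb m (C : 'I_m -> {fset nat}) (x : 'I_m -> nat) : bool :=
  [forall s, x s \in C s].

Definition subbox_of m (C : 'I_m -> {fset nat}) (B : subbox m) : bool :=
  [forall s, (B.2 s `<=` C s) && (#|` B.2 s| == d (B.1 s))].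

(* Counting the tiles through each point encodes disjointness and covering at once. *)
Definition tiles m (C : 'I_m -> {fset nat}) (T : seq (subbox m)) : Prop :=
  all (subbox_of C) T /\ forall x, count (fun B => in_boxb B.2 x) T = in_boxb C x.

Definition tileable m (C : 'I_m -> {fset nat}) : Prop := exists T, tiles C T.

Lemma tileable_eq m (C C' : 'I_m -> {fset nat}) : C =1 C' -> tileable C -> tileable C'.
Proof.
move=> eqC [T [subT cntT]]; exists T; split.
  by apply: sub_all subT => B; rewrite /subbox_of; under eq_forallb => s do rewrite eqC.
by move=> x; rewrite cntT /in_boxb; under eq_forallb => s do rewrite eqC.
Qed.

Lemma tileable_box0 (C : 'I_0 -> {fset nat}) : tileable C.
Proof.
have all0 (P : pred 'I_0) : [forall s, P s] by apply/forallP => -[].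
exists [:: subbox0 0]; split=> [|x]; first by rewrite /= andbT; apply: all0.
by rewrite /= addn0 /in_boxb !(all0 (fun s => _ \in _)).
Qed.

Lemma tileable_perm m (C : 'I_m -> {fset nat}) (r : 'S_m) :
  tileable C -> tileable (fun s => C (r s)).
Proof.
have in_boxb_perm D x : in_boxb (fun s => D (r s)) x = in_boxb D (fun t => x ((r^-1)%g t)).
  by rewrite /in_boxb -[RHS](forall_perm r); apply: eq_forallb => s; rewrite permK.
move=> [T [subT cntT]].
exists (map (fun B : subbox m => ((r * B.1)%g, fun s => B.2 (r s))) T); split.
  rewrite all_map; apply: sub_all subT => B /forallP subB; apply/forallP => s /=.
  by rewrite permM; apply: subB.
move=> x; rewrite count_map in_boxb_perm -cntT.
by apply: eq_count => B; rewrite /= in_boxb_perm.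
Qed.

Lemma tileable_imfset m (C : 'I_m -> {fset nat}) (f g : 'I_m -> nat -> nat) :
  (forall s, cancel (f s) (g s)) ->
  tileable C -> tileable (fun s => [fset f s a | a in C s]).
Proof.
move=> fK [T [subT cntT]].
pose fB (B : subbox m) : subbox m := (B.1, fun s => [fset f s a | a in B.2 s]).
have in_boxb_im D x : in_boxb (fun s => [fset f s a | a in D s]) x =
    [forall s, f s (g s (x s)) == x s] && in_boxb D (fun s => g s (x s)).
  apply/forallP/andP => [H|[/forallP H1 /forallP H2] s].
    by split; apply/forallP => s; have := H s; rewrite (mem_imfset_can _ _ (fK s)) => /andP[].
  by rewrite (mem_imfset_can _ _ (fK s)) H1 H2.
exists (map fB T); split.
  rewrite all_map; apply: sub_all subT => B /forallP subB; apply/forallP => s /=.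
  case/andP: (subB s) => /fsubsetP sub_s /eqP <-.
  rewrite card_imfset /= ?eqxx ?andbT; last exact: can_inj (fK s).
  apply/fsubsetP => y.
  by rewrite !(mem_imfset_can _ _ (fK s)) => /andP[-> /sub_s].
move=> x; rewrite count_map in_boxb_im -mulnb -cntT -count_andl.
by apply: eq_count => B; rewrite /= in_boxb_im.
Qed.

Definition rcons_box m (C : 'I_m -> {fset nat}) (L : {fset nat}) : 'I_m.+1 -> {fset nat} :=
  fun s => if unlift ord_max s is Some j then C j else L.

Lemma rcons_box_lift m C L j : @rcons_box m C L (lift ord_max j) = C j.
Proof. by rewrite /rcons_box liftK. Qed.

Lemma rcons_box_max m C L : @rcons_box m C L ord_max = L.
Proof. by rewrite /rcons_box unlift_none. Qed.

Lemma in_boxb_rcons m C L x : in_boxb (@rcons_box m C L) x =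
  (x ord_max \in L) && in_boxb C (fun j => x (lift ord_max j)).
Proof.
rewrite /in_boxb forall_ord_max rcons_box_max.
by congr andb; apply: eq_forallb => j; rewrite rcons_box_lift.
Qed.

Lemma tileable_rcons m (C : 'I_m -> {fset nat}) L :
  #|` L| = d m -> tileable C -> tileable (rcons_box C L).
Proof.
move=> cardL [T [subT cntT]].
exists (map (fun B : subbox m => (lift_perm ord_max ord_max B.1, rcons_box B.2 L)) T); split.
  rewrite all_map; apply: sub_all subT => B /forallP subB; apply/forallP => s /=.
  case: (unliftP ord_max s) => [j ->|->].
    by rewrite !rcons_box_lift lift_perm_lift lift_max.
  by rewrite !rcons_box_max lift_perm_id fsubset_refl cardL eqxx.
move=> x; rewrite count_map in_boxb_rcons -mulnb -cntT -count_andl.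
by apply: eq_count => B; rewrite /= in_boxb_rcons.
Qed.

Section LastFactor.
Variables (m : nat) (C : 'I_m -> {fset nat}).

Lemma tileable_rcons_fiota0 o : tileable (rcons_box C (fiota o 0)).
Proof.
by exists [::]; split=> // x; rewrite in_boxb_rcons in_fiota addn0; case: leqP.
Qed.

Lemma tileable_rcons_fiotaD o l1 l2 :
  tileable (rcons_box C (fiota o l1)) -> tileable (rcons_box C (fiota (o + l1) l2)) ->
  tileable (rcons_box C (fiota o (l1 + l2))).
Proof.
move=> [T1 [sub1 cnt1]] [T2 [sub2 cnt2]].
have sub_fiota (L : {fset nat}) : L `<=` fiota o (l1 + l2) ->
    {subset subbox_of (rcons_box C L) <= subbox_of (rcons_box C (fiota o (l1 + l2)))}.
  move=> subL B /forallP subB; apply/forallP => s; case/andP: (subB s) => subBs ->.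
  rewrite andbT (fsubset_trans subBs) //.
  by case: (unliftP ord_max s) => [j ->|->]; rewrite ?rcons_box_lift ?rcons_box_max.
exists (T1 ++ T2); split.
  rewrite all_cat (sub_all (sub_fiota _ _) sub1) ?(sub_all (sub_fiota _ _) sub2) //;
    by apply/fsubsetP => y; rewrite !in_fiota; lia.
move=> x; rewrite count_cat cnt1 cnt2 !in_boxb_rcons !in_fiota.
by case: in_boxb; rewrite ?andbT ?andbF //; set y := x ord_max; lia.
Qed.

Lemma tileable_rcons_fiota_shift l o :
  tileable (rcons_box C (fiota 1 l)) -> 0 < o -> tileable (rcons_box C (fiota o l)).
Proof.
move=> tile1 o_gt0.
pose f (s : 'I_m.+1) := if s == ord_max then addn o.-1 else id.
pose g (s : 'I_m.+1) := if s == ord_max then subn^~ o.-1 else id.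
have fK s : cancel (f s) (g s) by rewrite /f /g; case: (s == ord_max) => // y /=; rewrite addKn.
apply: tileable_eq (tileable_imfset fK tile1) => s; apply/fsetP => y.
rewrite (mem_imfset_can _ _ (fK s)) /f /g.
case: (unliftP ord_max s) => [j ->|->]; last by rewrite eqxx !rcons_box_max !in_fiota; lia.
by rewrite [lift _ _ == _]eq_sym (negbTE (neq_lift _ _)) !rcons_box_lift eqxx.
Qed.

Lemma tileable_rcons_fiotaM l :
  (forall o, 0 < o -> tileable (rcons_box C (fiota o l))) ->
  forall a o, 0 < o -> tileable (rcons_box C (fiota o (a * l))).
Proof.
move=> tile_l; elim=> [|a IHa] o o_gt0; first exact: tileable_rcons_fiota0.
by rewrite mulSn; apply: tileable_rcons_fiotaD; [apply: tile_l | apply: IHa; lia].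
Qed.

End LastFactor.
End Tilings.

Close Scope fset_scope.

Section CobwebBoxes.
Variable F : nat -> nat.
Hypothesis F_lincomb :
  forall k m, 0 < k -> 0 < m -> exists a b, F (k + m) = a * F k + b * F m.

Lemma Fsplit m n : m < n -> exists a b, F n.+1 = a * F (n - m) + b * F m.+1.
Proof.
move=> lt_mn; have [||a [b split_n]] := @F_lincomb (n - m) m.+1; rewrite ?subn_gt0 //.
by exists a, b; rewrite -split_n; congr F; lia.
Qed.

Definition Fbox m n : 'I_m -> {fset nat} := fun s => fiota 1 (F (n - m + 1 + s)).
Arguments Fbox : clear implicits.

Lemma Fbox_rcons m n : m <= n ->
  Fbox m.+1 n.+1 =1 rcons_box (Fbox m n) (fiota 1 (F n.+1)).
Proof.
move=> le_mn s; case: (unliftP ord_max s) => [j ->|->].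
  by rewrite rcons_box_lift /Fbox lift_max subSS.
by rewrite rcons_box_max /Fbox /=; congr (fiota 1 (F _)); lia.
Qed.

(* The cyclic shift s |-> s + 1 (mod m+1) brings the first factor of V_{m+1,n} last. *)
Lemma Fbox_rot m n : m < n ->
  (fun s => Fbox m.+1 n (perm (@ordS_inj m.+1) s)) =1
  rcons_box (Fbox m n) (fiota 1 (F (n - m))).
Proof.
move=> lt_mn s; rewrite permE /Fbox /=.
case: (unliftP ord_max s) => [j ->|->]; rewrite ?rcons_box_lift ?rcons_box_max /=.
  rewrite /bump leqNgt ltn_ord add0n modn_small ?ltnS //.
  by congr (fiota 1 (F _)); lia.
by rewrite modnn; congr (fiota 1 (F _)); lia.
Qed.

Lemma Fbox_tileable n m : m <= n -> tileable (F \o succn) (Fbox m n).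
Proof.
elim: n m => [|n IHn] [|m] le_mn //; try exact: tileable_box0.
have [eq_mn|lt_mn] := eqVneq m n.
  rewrite eq_mn; exists [:: (1%g, Fbox n.+1 n.+1)]; split=> [|x]; last by rewrite /= addn0.
  rewrite /= andbT; apply/forallP => s.
  by rewrite fsubset_refl perm1 /Fbox card_fiota subnn add0n add1n eqxx.
have {lt_mn}lt_mn : m < n by rewrite ltn_neqAle lt_mn.
have [a [b split_n]] := Fsplit lt_mn.
apply: tileable_eq (fun s => esym (Fbox_rcons (ltnW lt_mn) s)) _.
rewrite split_n; apply: tileable_rcons_fiotaD => //.
  apply: tileable_rcons_fiotaM => // o o_gt0; apply: tileable_rcons_fiota_shift => //.
  by apply: tileable_eq (Fbox_rot lt_mn) _; apply: tileable_perm; apply: IHn.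
apply: tileable_rcons_fiotaM => [o _|]; last by lia.
by apply: tileable_rcons; rewrite ?card_fiota //; apply: IHn; lia.
Qed.

Lemma tiling_of_tiles m n T : tiles (F \o succn) (Fbox m n) T -> tiling F m n T.
Proof.
move=> [subT cntT].
have in_boxbP B x : in_subbox m B x <-> in_boxb B.2 x.
  by split => [H|/forallP H //]; apply/forallP.
have in_FboxP x : in_Fbox F m n x <-> in_boxb (Fbox m n) x.
  by split => [H|/forallP H]; [apply/forallP|] => s; have := H s; rewrite /Fbox in_fiota; lia.
split; [|split].
- move=> i lt_i s.
  have /forallP/(_ s)/andP[/fsubsetP subB /eqP cardB] := all_nthP (subbox0 m) subT i lt_i.
  by split=> // a /subB; rewrite in_fiota; lia.
- move=> i j lt_i lt_j ne x [/in_boxbP Bi /in_boxbP Bj].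
  have := @count_gt1_nth _ (fun B => in_boxb B.2 x) _ _ _ _ lt_i lt_j ne Bi Bj.
  by rewrite cntT; case: in_boxb.
move=> x; apply: iff_trans (in_FboxP x) _.
have -> : in_boxb (Fbox m n) x = has (fun B => in_boxb B.2 x) T.
  by rewrite has_count cntT; case: in_boxb.
split=> [/(has_nthP (subbox0 m))[i lt_i /in_boxbP]|[i lt_i /in_boxbP]].
  by exists i.
by move=> Bi; apply/(has_nthP (subbox0 m)); exists i.
Qed.

Lemma Ffact0 : Ffact F 0 = 1.
Proof. by rewrite /Ffact big_geq. Qed.

Lemma FfactS n : Ffact F n.+1 = F n.+1 * Ffact F n.
Proof. by rewrite /Ffact big_nat_recr //= mulnC. Qed.

Lemma admissible_lincomb : admissible F.
Proof.
elim=> [|n IHn] [|m] le_mn; try by exists 1; rewrite ?Ffact0 ?subn0 ?mul1n.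
have [eq_mn|lt_mn] := eqVneq m n.
  by exists 1; rewrite eq_mn subnn Ffact0 muln1 mul1n.
have {lt_mn}lt_mn : m < n by rewrite ltn_neqAle lt_mn.
have [c1 fact_m1] := IHn m.+1 lt_mn.
have [c2 fact_m] := IHn m (ltnW lt_mn).
have [a [b split_n]] := Fsplit lt_mn.
have kS : n - m = (n - m.+1).+1 by lia.
exists (a * c1 + b * c2); rewrite subSS FfactS split_n mulnDl -!mulnA {1}fact_m1 fact_m.
by rewrite kS !FfactS; nia.
Qed.

End CobwebBoxes.

Theorem theorem1 (F : nat -> nat) :
  Fpos F -> T_lambda F -> cobweb_tiling F.
Proof.
move=> _ [lamK [lamM hF]].
have F_lincomb k m : 0 < k -> 0 < m -> exists a b, F (k + m) = a * F k + b * F m.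
  by move=> k_gt0 m_gt0; exists (lamK k m), (lamM k m); exact: hF.
split; first exact: admissible_lincomb.
move=> m n _ le_mn; have [T tileT] := Fbox_tileable F_lincomb le_mn.
by exists T; exact: tiling_of_tiles.
Qed.
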